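(* Let $X,Y$ be real Hilbert spaces and $T:X\to Y$ an injective bounded linear operator. Let $x^\dagger\in X$, $y^\dagger:=Tx^\dagger$, and $x_0\in X$. For $\alpha>0$ let $x_\alpha:=(T^*T+\alpha I)^{-1}(T^*y^\dagger+\alpha x_0)$, i.e. the unique minimizer over $x\in X$ of $\|y^\dagger-Tx\|^2+\alpha\|x-x_0\|^2$. Let $0\le\nu\le1$. Then $$N_\nu^{-1}\|x^\dagger-x_0\|_{\nu:1}\le\sup_{\alpha>0}\alpha^{-\nu}\|x^\dagger-x_\alpha\|\le\|x^\dagger-x_0\|_{\nu:1}.$$ Equalities hold for $\nu=0$ and $\nu=1$. If $\nu=1$, then $\sup_{\alpha>0}$ can be replaced by $\lim_{\alpha\searrow0}$.
   Context: $X_1:=\mathrm{range}(T^*T)$ with norm $\|x\|_1:=\|(T^*T)^{-1}x\|$. For $x\in X$ and $t>0$, $K_t(x):=\inf_{x_1\in X_1}\big(\|x-x_1\|^2+t^2\|x_1\|_1^2\big)^{1/2}$, and for $0\le\nu\le1$, $\|x\|_{\nu:1}:=\sup_{t>0}t^{-\nu}K_t(x)\in[0,\infty]$. For $0<\nu<1$, $N_\nu:=\big(\nu^\nu(1-\nu)^{1-\nu}\big)^{-1/2}$, and $N_0:=N_1:=1$. *)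

From HB Require Import structures.
From mathcomp Require Import all_boot all_order all_algebra.
From mathcomp Require Import all_classical all_reals all_analysis.
Set Implicit Arguments. Unset Strict Implicit. Unset Printing Implicit Defensive.
Import Order.TTheory GRing.Theory Num.Theory.
Import numFieldNormedType.Exports.
Local Open Scope classical_set_scope.
Local Open Scope ring_scope.

(* ip is an inner product on V inducing the norm of V; a complete normed
   module with such an inner product is a real Hilbert space. *)
Definition is_inner_product (R : realType) (V : normedModType R)
    (ip : V -> V -> R) : Prop :=
  (forall x y, ip x y = ip y x) /\
  (forall (a : R) (x y z : V), ip (a *: x + y) z = a * ip x z + ip y z) /\
  (forall x, ip x x = `|x| ^+ 2).

Definition is_adjoint (R : realType) (X Y : normedModType R)
    (ipX : X -> X -> R) (ipY : Y -> Y -> R) (T : X -> Y) (Ts : Y -> X) : Prop :=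
  forall x y, ipY (T x) y = ipX x (Ts y).

(* K-functional: K_t(x) = inf_{x1 in range(T*T)} (|x-x1|^2 + t^2 |x1|_1^2)^(1/2)
   with |x1|_1 = |(T*T)^{-1} x1|; x1 is parametrised as x1 = T*T z, so
   |x1|_1 = |z| (T*T is injective since T is). *)
Definition Kfun (R : realType) (X Y : normedModType R)
    (T : X -> Y) (Ts : Y -> X) (t : R) (x : X) : R :=
  inf [set Num.sqrt (`|x - Ts (T z)| ^+ 2 + t ^+ 2 * `|z| ^+ 2) | z in [set: X]].

Definition interp_norm (R : realType) (X Y : normedModType R)
    (T : X -> Y) (Ts : Y -> X) (nu : R) (x : X) : \bar R :=
  ereal_sup [set ((t `^ (- nu)) * Kfun T Ts t x)%:E | t in `]0, +oo[%classic].

Definition Nnu (R : realType) (nu : R) : R :=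
  if (0 < nu) && (nu < 1)
  then ((nu `^ nu) * ((1 - nu) `^ (1 - nu))) `^ (- (2^-1))
  else 1.

From HB Require Import structures.
From mathcomp Require Import all_boot all_order all_algebra.
From mathcomp Require Import all_classical all_reals all_analysis.
From mathcomp Require Import lra ring.
Import Order.TTheory GRing.Theory Num.Theory.
Import numFieldNormedType.Exports.
Local Open Scope classical_set_scope.
Local Open Scope ring_scope.

Set Implicit Arguments. Unset Strict Implicit. Unset Printing Implicit Defensive.

(* With A = T^*T and e = x^dagger - x0, the error r_a = x^dagger - x_a solves
   (A + a) r_a = a e.  Writing z = a^-1 r_a - w shows
   |e - A z|^2 + a^2 |z|^2 >= |r_a|^2 + 2 a <A w, w>, so |r_a| <= K_a(e); and
   z = a^-1 r_a gives e - A z = r_a, so K_t(e) <= |r_a| (1 + t^2/a^2)^(1/2).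
   The first estimate is the upper bound.  The second one, with a/t equal to the
   minimiser ((1-nu)/nu)^(1/2) of l^nu (1 + l^-2)^(1/2), is the lower bound with
   constant N_nu; for nu = 0 (resp. nu = 1) let a/t tend to +oo (resp. 0).
   Finally a^-1 r_a = (A + a)^-1 e has a norm nonincreasing in a, which gives the
   limit for nu = 1. *)

Section InnerProduct.
Variables (R : realType) (V : normedModType R) (ip : V -> V -> R).
Hypothesis ip_inner : is_inner_product ip.

Lemma ipC x y : ip x y = ip y x.
Proof. exact: ip_inner.1. Qed.

Lemma ip_norm x : ip x x = `|x| ^+ 2.
Proof. exact: ip_inner.2.2. Qed.

Lemma ip_ge0 x : 0 <= ip x x.
Proof. by rewrite ip_norm exprn_ge0. Qed.

Lemma ip_eq0 x : (ip x x == 0) = (x == 0).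
Proof. by rewrite ip_norm sqrf_eq0 normr_eq0. Qed.

Lemma ip0l z : ip 0 z = 0.
Proof. have := ip_inner.2.1 1 0 0 z; rewrite scale1r addr0 mul1r; lra. Qed.

Lemma ipDl x y z : ip (x + y) z = ip x z + ip y z.
Proof. by rewrite -[x]scale1r ip_inner.2.1 mul1r scale1r. Qed.

Lemma ipZl a x z : ip (a *: x) z = a * ip x z.
Proof. by rewrite -[a *: x]addr0 ip_inner.2.1 ip0l addr0. Qed.

Lemma ipNl x z : ip (- x) z = - ip x z.
Proof. by rewrite -scaleN1r ipZl mulN1r. Qed.

Lemma ipDr x y z : ip z (x + y) = ip z x + ip z y.
Proof. by rewrite !(ipC z) ipDl. Qed.

Lemma ipZr a x z : ip z (a *: x) = a * ip z x.
Proof. by rewrite !(ipC z) ipZl. Qed.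

Lemma ipNr x z : ip z (- x) = - ip z x.
Proof. by rewrite !(ipC z) ipNl. Qed.

Definition ipE := (ipDl, ipDr, ipNl, ipNr, ipZl, ipZr).

End InnerProduct.

Lemma adjoint_linear (R : realType) (X Y : normedModType R)
    (ipX : X -> X -> R) (ipY : Y -> Y -> R) (T : {linear X -> Y}) (Ts : Y -> X) :
  is_inner_product ipX -> is_inner_product ipY -> is_adjoint ipX ipY T Ts ->
  linear Ts.
Proof.
move=> hX hY adj a y1 y2; apply/eqP; rewrite -subr_eq0 -(ip_eq0 hX).
set D := _ - _; apply/eqP; rewrite {2}/D !(ipE hX) -!adj !(ipE hY); lra.
Qed.

Section Gram.
Variables (R : realType) (X Y : normedModType R).
Variables (T : {linear X -> Y}) (Ts : Y -> X).
Hypothesis Ts_linear : linear Ts.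

Let gram_subproof : linear (Ts \o T).
Proof. by move=> a x y; rewrite /= linearP Ts_linear. Qed.

Definition gram : {linear X -> X} :=
  HB.pack (Ts \o T) (GRing.isLinear.Build R X X _ (Ts \o T) gram_subproof).

Lemma gramE x : gram x = Ts (T x).
Proof. by []. Qed.

End Gram.

Lemma gram_ge0 (R : realType) (X Y : normedModType R)
    (ipX : X -> X -> R) (ipY : Y -> Y -> R) (T : {linear X -> Y}) (Ts : Y -> X)
    (Ts_linear : linear Ts) :
  is_inner_product ipX -> is_inner_product ipY -> is_adjoint ipX ipY T Ts ->
  forall w, 0 <= ipX (gram T Ts_linear w) w.
Proof. by move=> hX hY adj w; rewrite gramE (ipC hX) -adj ip_ge0. Qed.

Section Tikhonov.
Variables (R : realType) (V : normedModType R) (ip : V -> V -> R).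
Variable A : {linear V -> V}.
Hypotheses (ip_inner : is_inner_product ip) (A_ge0 : forall w, 0 <= ip (A w) w).

Lemma tikhonov_error_eq (a : R) (xd x0 x : V) :
  A x + a *: x = A xd + a *: x0 -> A (xd - x) + a *: (xd - x) = a *: (xd - x0).
Proof.
move=> hx; rewrite linearB !scalerBr addrACA -opprD hx opprD addrACA.
by rewrite subrr add0r.
Qed.

Lemma resolvent_scaled (a : R) (e r : V) : 0 < a ->
  A r + a *: r = a *: e -> A (a^-1 *: r) + a *: (a^-1 *: r) = e.
Proof.
move=> a0 hr; rewrite linearZ scalerA mulfV ?gt_eqF // scale1r.
rewrite -[e]scale1r -(mulVf (lt0r_neq0 a0)) -scalerA -hr scalerDr scalerA.
by rewrite mulVf ?gt_eqF // scale1r.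
Qed.

Lemma tikhonov_error_attained (a : R) (e r : V) : 0 < a ->
  A r + a *: r = a *: e -> e - A (a^-1 *: r) = r.
Proof.
move=> a0 hr; rewrite -(resolvent_scaled a0 hr) addrC addKr scalerA.
by rewrite mulfV ?gt_eqF // scale1r.
Qed.

Lemma tikhonov_error_le (a : R) (e r z : V) : 0 < a ->
  A r + a *: r = a *: e -> `|r| ^+ 2 <= `|e - A z| ^+ 2 + a ^+ 2 * `|z| ^+ 2.
Proof.
move=> a0 hr; pose w := a^-1 *: r - z.
have ez : z = a^-1 *: r - w by rewrite /w opprB addrC subrK.
clearbody w; have -> : e - A z = r + A w.
  by rewrite ez linearB opprB addrCA (tikhonov_error_attained a0 hr) addrC.
rewrite ez -!(ip_norm ip_inner) -subr_ge0.
have -> : ip (r + A w) (r + A w) + a ^+ 2 * ip (a^-1 *: r - w) (a^-1 *: r - w)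
    - ip r r = ip (r + A w - a *: w) (r + A w - a *: w) + 2 * a * ip (A w) w.
  rewrite !(ipE ip_inner) (ipC ip_inner (A w) r) (ipC ip_inner w r).
  by rewrite (ipC ip_inner w (A w)); field; exact: lt0r_neq0.
by rewrite addr_ge0 ?ip_ge0 // !mulr_ge0 ?A_ge0 // ltW.
Qed.

Lemma resolvent_norm_le (a b : R) (e u v : V) : 0 < b -> b < a ->
  A u + a *: u = e -> A v + b *: v = e -> `|u| <= `|v|.
Proof.
move=> b0 ba hu hv; pose d := v - u.
have hd : A d + b *: d = (a - b) *: u.
  rewrite linearB scalerBr scalerBl addrACA -opprD hv -hu opprD addrACA.
  by rewrite subrr add0r.
have ud_ge0 : 0 <= ip u d.
  rewrite -(@pmulr_rge0 _ (a - b)) ?subr_gt0 // -(ipZl ip_inner) -hd.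
  by rewrite (ipDl ip_inner) (ipZl ip_inner) addr_ge0 ?A_ge0 // mulr_ge0 ?ip_ge0 ?ltW.
have -> : v = u + d by rewrite addrC subrK.
clearbody d; rewrite -(@ler_pXn2r _ 2) ?nnegrE // -!(ip_norm ip_inner) !(ipE ip_inner).
by rewrite (ipC ip_inner d u) -addrA lerDl addr_ge0 // addr_ge0 ?ip_ge0.
Qed.

Lemma tikhonov_error_ratio_cvg (e : V) (r : R -> V) :
  (forall a : R, 0 < a -> A (r a) + a *: r a = a *: e) ->
  (fun a => (a^-1 * `|r a|)%:E) x @[x --> 0^'+] -->
  ereal_sup [set (a^-1 * `|r a|)%:E | a in `]0, +oo[%classic].
Proof.
move=> hr; apply: nonincreasing_at_right_cvge => // a b.
rewrite !in_itv /= !andbT => a0 b0; rewrite le_eqVlt => /predU1P[->//|ab].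
have scaled c : 0 < c -> c^-1 * `|r c| = `|c^-1 *: r c|.
  by move=> c0; rewrite normrZ gtr0_norm ?invr_gt0.
rewrite lee_fin !scaled //.
exact: resolvent_norm_le a0 ab (resolvent_scaled b0 (hr b b0))
  (resolvent_scaled a0 (hr a a0)).
Qed.

End Tikhonov.

Lemma Kfun_le (R : realType) (X Y : normedModType R) (T : X -> Y) (Ts : Y -> X)
    (t : R) (x z : X) :
  Kfun T Ts t x <= Num.sqrt (`|x - Ts (T z)| ^+ 2 + t ^+ 2 * `|z| ^+ 2).
Proof.
apply: ge_inf; last by exists z.
by exists 0 => _ [? _ <-]; exact: sqrtr_ge0.
Qed.

Lemma Kfun_ge (R : realType) (X Y : normedModType R) (T : X -> Y) (Ts : Y -> X)
    (t : R) (x : X) (c : R) : 0 <= c ->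
  (forall z, c ^+ 2 <= `|x - Ts (T z)| ^+ 2 + t ^+ 2 * `|z| ^+ 2) ->
  c <= Kfun T Ts t x.
Proof.
move=> c0 hc; apply: lb_le_inf; first by eexists; exists 0.
by move=> _ [z _ <-]; rewrite -(ger0_norm c0) -sqrtr_sqr ler_wsqrtr.
Qed.

Lemma pos_itvP (R : realType) (a : R) : `]0, +oo[%classic a <-> 0 < a.
Proof. rewrite /= in_itv /= andbT; exact: iff_refl. Qed.

Lemma ereal_sup_pos_le (R : realType) (f g : R -> R) :
  (forall a : R, 0 < a -> f a <= g a) ->
  (ereal_sup [set (f a)%:E | a in `]0%R, +oo[%classic]
   <= ereal_sup [set (g a)%:E | a in `]0%R, +oo[%classic])%E.
Proof.
move=> fg; apply: ge_ereal_sup => _ [a a0 <-].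
apply: (@le_trans _ _ (g a)%:E); last by apply: ereal_sup_ubound; exists a.
by rewrite lee_fin fg //; apply/pos_itvP.
Qed.

Lemma sqrt_sqrD_le (R : realType) (x y : R) : 0 <= x -> 0 <= y ->
  Num.sqrt (x ^+ 2 + y ^+ 2) <= x + y.
Proof.
move=> x0 y0; apply: (@le_trans _ _ (Num.sqrt ((x + y) ^+ 2))).
  by apply: ler_wsqrtr; nra.
by rewrite sqrtr_sqr ger0_norm // addr_ge0.
Qed.

Lemma Nnu_gt0 (R : realType) (nu : R) : 0 < Nnu nu.
Proof.
rewrite /Nnu; case: ifPn => [/andP[n0 n1]|_]; last exact: ltr01.
by apply: powR_gt0; apply: mulr_gt0; apply: powR_gt0; lra.
Qed.

Lemma Nnu_eq1 (R : realType) (nu : R) : nu = 0 \/ nu = 1 -> Nnu nu = 1.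
Proof. by rewrite /Nnu; case=> ->; rewrite ltxx ?andbF. Qed.

Lemma Nnu_interior (R : realType) (nu : R) : 0 < nu -> nu < 1 ->
  Num.sqrt ((1 - nu) / nu) `^ nu * Num.sqrt (1 + (Num.sqrt ((1 - nu) / nu))^-2)
  = Nnu nu.
Proof.
move=> n0 n1; rewrite /Nnu n0 n1 /=.
have q0 : 0 < (1 - nu) / nu by apply: divr_gt0; lra.
have -> : 1 + (Num.sqrt ((1 - nu) / nu))^-2 = (1 - nu)^-1.
  by rewrite sqr_sqrtr ?ltW // invf_div; field; lra.
rewrite powRN -powR12_sqrt ?ltW // -powR12_sqrt ?invr_ge0 ?subr_ge0 ?ltW //.
rewrite powRAC -powRM ?powR_ge0 ?invr_ge0 ?subr_ge0 ?ltW //.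
have N0 : (nu `^ nu * (1 - nu) `^ (1 - nu)) `^ 2^-1 != 0.
  by rewrite gt_eqF // powR_gt0 // mulr_gt0 // powR_gt0 //; lra.
apply: (mulIf N0); rewrite mulVf // -powRM ?mulr_ge0 ?powR_ge0 ?invr_ge0 ?subr_ge0 ?ltW //.
have -> : ((1 - nu) / nu) `^ nu * (1 - nu)^-1 * (nu `^ nu * (1 - nu) `^ (1 - nu))
   = (((1 - nu) / nu) `^ nu * nu `^ nu) * (1 - nu) `^ (1 - nu) * (1 - nu)^-1.
  by ring.
rewrite -powRM ?ltW // divfK ?gt_eqF // -powRD; last by apply/implyP => /eqP; lra.
rewrite addrCA subrr addr0 powRr1 ?subr_ge0 ?ltW // mulfV ?gt_eqF ?powR1 //; lra.
Qed.

Section InterpolationBound.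
Variables (R : realType) (K rs : R -> R) (s : R).
Hypothesis rs_ge0 : forall a, 0 <= rs a.
Hypothesis K_le : forall t a : R, 0 < t -> 0 < a ->
  K t <= Num.sqrt (rs a ^+ 2 + t ^+ 2 * (a^-1 * rs a) ^+ 2).

Let K_le_sum (t a : R) : 0 < t -> 0 < a -> K t <= rs a + t * (a^-1 * rs a).
Proof.
move=> t0 a0; apply: le_trans (K_le t0 a0) _; rewrite -exprMn.
by rewrite sqrt_sqrD_le ?rs_ge0 // !mulr_ge0 ?rs_ge0 ?invr_ge0 ?ltW.
Qed.

Lemma K_le_sup0 : (forall a : R, 0 < a -> rs a <= s) -> forall t : R, 0 < t -> K t <= s.
Proof.
move=> rs_le t t0; have s0 : 0 <= s := le_trans (rs_ge0 1) (rs_le 1 ltr01).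
apply/ler_addgt0Pr => ep ep0; pose q := ep / (s + 1).
have q0 : 0 < q by rewrite divr_gt0 //; lra.
have hq : q * (s + 1) = ep by rewrite divfK // gt_eqF //; lra.
have a0 : 0 < t / q by rewrite divr_gt0.
have tq : t * (t / q)^-1 = q.
  by rewrite invf_div mulrCA mulfV ?gt_eqF // mulr1.
apply: le_trans (K_le_sum t0 a0) _; rewrite mulrA tq.
have := rs_le _ a0; have := rs_ge0 (t / q); nra.
Qed.

Lemma K_le_sup1 : (forall a : R, 0 < a -> a^-1 * rs a <= s) ->
  forall t : R, 0 < t -> K t <= t * s.
Proof.
move=> rs_le t t0; have s0 : 0 <= s.
  by apply: le_trans (rs_le 1 ltr01); rewrite invr1 mul1r.
apply/ler_addgt0Pr => ep ep0; pose q := ep / (s + 1).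
have q0 : 0 < q by rewrite divr_gt0 //; lra.
have hq : q * (s + 1) = ep by rewrite divfK // gt_eqF //; lra.
have rs_q : rs q <= q * s by rewrite -ler_pdivrMl // rs_le.
apply: le_trans (K_le_sum t0 q0) _.
have : t * (q^-1 * rs q) <= t * s by apply: ler_wpM2l; [exact: ltW | exact: rs_le].
nra.
Qed.

Lemma K_le_sup_interior (nu : R) : 0 < nu < 1 ->
  (forall a : R, 0 < a -> a `^ (- nu) * rs a <= s) ->
  forall t : R, 0 < t -> t `^ (- nu) * K t <= Nnu nu * s.
Proof.
move=> /andP[n0 n1] rs_le t t0; pose l := Num.sqrt ((1 - nu) / nu).
have l0 : 0 < l by rewrite sqrtr_gt0 divr_gt0 // subr_gt0.
have tl0 : 0 < t * l by rewrite mulr_gt0.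
have := rs_le _ tl0; rewrite powRN ler_pdivrMl ?powR_gt0 // => rs_tl.
have K_tl : K t <= rs (t * l) * Num.sqrt (1 + l^-2).
  apply: le_trans (K_le t0 tl0) _.
  have -> : rs (t * l) ^+ 2 + t ^+ 2 * ((t * l)^-1 * rs (t * l)) ^+ 2
      = rs (t * l) ^+ 2 * (1 + l^-2) by field; rewrite !gt_eqF.
  by rewrite sqrtrM ?exprn_ge0 // sqrtr_sqr ger0_norm.
have -> : Nnu nu * s = t `^ (- nu) * ((t * l) `^ nu * s * Num.sqrt (1 + l^-2)).
  rewrite -Nnu_interior // powRM ?ltW // powRN; field.
  by rewrite gt_eqF // powR_gt0.
rewrite ler_wpM2l ?powR_ge0 //; apply: le_trans K_tl _.
by rewrite ler_wpM2r ?sqrtr_ge0.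
Qed.

Lemma K_le_Nnu_sup (nu : R) : 0 <= nu <= 1 ->
  (forall a : R, 0 < a -> a `^ (- nu) * rs a <= s) ->
  forall t : R, 0 < t -> t `^ (- nu) * K t <= Nnu nu * s.
Proof.
move=> /andP[n0 n1] rs_le t t0.
have [nu0|nu_neq0] := eqVneq nu 0.
  subst nu; rewrite Nnu_eq1; last by left.
  rewrite oppr0 powRr0 !mul1r; apply: K_le_sup0 => // a a0.
  by have := rs_le a a0; rewrite oppr0 powRr0 mul1r.
have [nu1|nu_neq1] := eqVneq nu 1.
  subst nu; rewrite Nnu_eq1; last by right.
  rewrite (powR_inv1 (ltW t0)) mul1r ler_pdivrMl //.
  apply: K_le_sup1 => // a a0.
  by have := rs_le a a0; rewrite (powR_inv1 (ltW a0)).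
by apply: K_le_sup_interior; rewrite // lt0r nu_neq0 n0 /= lt_neqAle nu_neq1 n1.
Qed.

End InterpolationBound.

Lemma interp_sup_le (R : realType) (nu : R) (K rs : R -> R) : 0 <= nu <= 1 ->
  (forall a, 0 <= rs a) ->
  (forall t a : R, 0 < t -> 0 < a ->
     K t <= Num.sqrt (rs a ^+ 2 + t ^+ 2 * (a^-1 * rs a) ^+ 2)) ->
  (((Nnu nu)^-1)%:E * ereal_sup [set (t `^ (- nu) * K t)%:E | t in `]0%R, +oo[%classic]
   <= ereal_sup [set (a `^ (- nu) * rs a)%:E | a in `]0%R, +oo[%classic])%E.
Proof.
move=> nu01 rs_ge0 K_le.
have S_ub a : 0 < a -> ((a `^ (- nu) * rs a)%:E
    <= ereal_sup [set (a `^ (- nu) * rs a)%:E | a in `]0%R, +oo[%classic])%E.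
  by move=> a0; apply: ereal_sup_ubound; exists a => //; apply/pos_itvP.
case: (ereal_sup [set (a `^ (- nu) * rs a)%:E | a in `]0%R, +oo[%classic]) S_ub
  => [s||] S_ub; last 2 first.
- exact: leey.
- by have := S_ub 1 ltr01; rewrite leeNy_eq.
have N0 := Nnu_gt0 nu.
have KN : (ereal_sup [set (t `^ (- nu) * K t)%:E | t in `]0%R, +oo[%classic]
    <= (Nnu nu * s)%:E)%E.
  apply: ge_ereal_sup => _ [t /pos_itvP t0 <-]; rewrite lee_fin.
  by apply: K_le_Nnu_sup => // a a0; rewrite -lee_fin S_ub.
apply: le_trans (lee_wpmul2l _ KN) _; first by rewrite lee_fin invr_ge0 ltW.
by rewrite -EFinM mulrA mulVf ?gt_eqF // mul1r.
Qed.

Theorem proposition3 (R : realType) (X Y : completeNormedModType R)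
    (ipX : X -> X -> R) (ipY : Y -> Y -> R)
    (T : {linear X -> Y}) (Ts : Y -> X)
    (xd x0 : X) (xa : R -> X) (nu : R) :
  is_inner_product ipX -> is_inner_product ipY ->
  continuous T -> injective T ->
  is_adjoint ipX ipY T Ts ->
  (forall a : R, 0 < a -> Ts (T (xa a)) + a *: xa a = Ts (T xd) + a *: x0) ->
  0 <= nu <= 1 ->
  let S := ereal_sup [set ((a `^ (- nu)) * `|xd - xa a|)%:E
                     | a in `]0, +oo[%classic] in
  let Nx := interp_norm T Ts nu (xd - x0) in
  [/\ ((Nnu nu)^-1)%:E * Nx <= S, S <= Nx,
      (nu = 0%R \/ nu = 1%R -> S = Nx) &
      (nu = 1%R -> (fun a => ((a ^-1) * `|xd - xa a|)%:E) x @[x --> 0^'+] --> Nx)]%E.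
Proof.
move=> hX hY _ _ adj hxa nu01 S Nx.
have Ts_linear := adjoint_linear hX hY adj.
have A_ge0 := gram_ge0 Ts_linear hX hY adj.
set e := xd - x0.
have err_eq (a : R) : 0 < a ->
    gram T Ts_linear (xd - xa a) + a *: (xd - xa a) = a *: e.
  by move=> a0; apply: tikhonov_error_eq; exact: hxa.
have err_le_K (a : R) : 0 < a -> `|xd - xa a| <= Kfun T Ts a e.
  move=> a0; apply: Kfun_ge => // z.
  by have := tikhonov_error_le hX A_ge0 z a0 (err_eq a a0); rewrite gramE.
have K_le (t a : R) : 0 < t -> 0 < a -> Kfun T Ts t e
    <= Num.sqrt (`|xd - xa a| ^+ 2 + t ^+ 2 * (a^-1 * `|xd - xa a|) ^+ 2).
  move=> _ a0; have attained : e - Ts (T (a^-1 *: (xd - xa a))) = xd - xa a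
    := tikhonov_error_attained a0 (err_eq a a0).
  have := Kfun_le T Ts t e (a^-1 *: (xd - xa a)).
  by rewrite attained normrZ gtr0_norm ?invr_gt0.
have S_le : (S <= Nx)%E.
  by apply: ereal_sup_pos_le => a a0; rewrite ler_wpM2l ?powR_ge0 ?err_le_K.
have Nnu_S : (((Nnu nu)^-1)%:E * Nx <= S)%E.
  exact: interp_sup_le nu01 (fun a => normr_ge0 _) K_le.
have S_eq : nu = 0 \/ nu = 1 -> S = Nx.
  move=> nu_01; apply/eqP; rewrite eq_le S_le /=.
  by move: Nnu_S; rewrite Nnu_eq1 // invr1 mul1e.
split => // nu1; rewrite -S_eq; last by right.
have -> : S = ereal_sup [set (a^-1 * `|xd - xa a|)%:E | a in `]0, +oo[%classic].
  rewrite /S nu1; congr ereal_sup; apply: eq_imagel => a /pos_itvP a0.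
  by rewrite (powR_inv1 (ltW a0)).
exact: (tikhonov_error_ratio_cvg (r := fun a => xd - xa a) hX A_ge0 err_eq).
Qed.
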